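(* Let $(X,d)$ be a nonempty ultra-metric space, $G$ a topological group and $\pi\colon G\times X\to X$ a continuous action which is $\pi$-uniform with respect to the uniformity $\mathcal U_d$ of $d$. Then there exist an ultra-normed Boolean group $(E,\|\cdot\|)$ on which $G$ acts continuously by automorphisms, and an isometric $G$-equivariant embedding $\iota\colon X\hookrightarrow E$ with $\iota(X)$ closed in $E$, such that: (1) $E$ is the free Boolean group $B(X)$ (with $\iota(x)=\{x\}$) and $\|\cdot\|$ is the Graev-type ultra-norm extending $d$: fixing $x_0\in X$ and extending $d$ to $\overline X=X\cup\{\mathbf 0\}$ by $d(x,\mathbf 0)=\max\{d(x,x_0),1\}$, one has $\|u\|=\inf\max_{1\le i\le n} d(x_{2i-1},x_{2i})$, the infimum over all representations $u=\sum_{i=1}^{n}(x_{2i-1}+x_{2i})$ with $x_j\in\overline X$; (2) the topological group $E$ is naturally isomorphic to the free Boolean non-archimedean group $B_{NA}(X,\mathcal U_d)$.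
   Context: An ultra-metric satisfies $d(x,z)\le\max\{d(x,y),d(y,z)\}$. An ultra-norm on an abelian group is $\|\cdot\|\ge0$ with $\|0\|=0$, $\|-u\|=\|u\|$, $\|u+v\|\le\max\{\|u\|,\|v\|\}$ and $\|u\|=0\Rightarrow u=0$; it induces the metric $\|u-v\|$. The free Boolean group $B(X)$ is the group of finite subsets of $X$ under symmetric difference, with zero $\mathbf 0=\emptyset$. An action is $\pi$-uniform on $(X,\mathcal U)$ if for every $\varepsilon\in\mathcal U$ and $g_0\in G$ there exist $\delta\in\mathcal U$ and a neighborhood $O$ of $g_0$ with $(gx,gy)\in\varepsilon$ whenever $(x,y)\in\delta$, $g\in O$. $B_{NA}(X,\mathcal U)$ is the Boolean non-archimedean topological group (local base at identity of open subgroups, every non-identity element of order 2) with uniformly continuous $i\colon X\to B_{NA}$ such that every uniformly continuous map from $X$ into a Boolean non-archimedean group factors uniquely through $i$ via a continuous homomorphism. *)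

From HB Require Import structures.
From mathcomp Require Import all_boot all_order all_algebra.
From mathcomp Require Import finmap.
From mathcomp Require Import all_classical all_reals all_analysis.
Set Implicit Arguments. Unset Strict Implicit. Unset Printing Implicit Defensive.
Import Order.TTheory GRing.Theory Num.Theory.
Local Open Scope classical_set_scope.
Local Open Scope ring_scope.

Section Defs.
Variable R : realType.

Definition is_ultrametric (X : Type) (d : X -> X -> R) : Prop :=
  [/\ (forall x y, 0 <= d x y), (forall x, d x x = 0), (forall x y, d x y = 0 -> x = y),
      (forall x y, d x y = d y x) &
      (forall x y z, d x z <= Num.max (d x y) (d y z))].

Definition is_topgroup (G : topologicalType) (mul : G -> G -> G) (inv : G -> G) (one : G) : Prop :=
  [/\ (forall a b c, mul a (mul b c) = mul (mul a b) c),
      (forall a, mul one a = a /\ mul a one = a),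
      (forall a, mul (inv a) a = one /\ mul a (inv a) = one),
      continuous (fun p : G * G => mul p.1 p.2) &
      continuous inv].

Definition is_action (G X : Type) (mul : G -> G -> G) (one : G) (pi : G -> X -> X) : Prop :=
  (forall x, pi one x = x) /\ (forall g h x, pi (mul g h) x = pi g (pi h x)).

Definition action_continuous (G : topologicalType) (X : Type) (d : X -> X -> R)
  (pi : G -> X -> X) : Prop :=
  forall (g0 : G) (x0 : X) (e : R), 0 < e ->
    exists O : set G, nbhs g0 O /\
      exists2 del : R, 0 < del &
        forall g x, O g -> d x x0 < del -> d (pi g x) (pi g0 x0) < e.

(* pi-uniformity w.r.t. the uniformity U_d (base of entourages {d < e}) *)
Definition pi_uniform (G : topologicalType) (X : Type) (d : X -> X -> R)
  (pi : G -> X -> X) : Prop :=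
  forall (e : R) (g0 : G), 0 < e ->
    exists2 del : R, 0 < del &
      exists O : set G, nbhs g0 O /\
        forall g x y, O g -> d x y < del -> d (pi g x) (pi g y) < e.

Variable X : choiceType.

(* free Boolean group B(X): finite subsets of X under symmetric difference *)
Definition badd (u v : {fset X}) : {fset X} := ((u `\` v) `|` (v `\` u))%fset.

(* canonical embedding of Xbar = X u {0} (0 = None) into B(X) *)
Definition osing (a : option X) : {fset X} :=
  if a is Some x then [fset x]%fset else fset0.

Definition dbar (d : X -> X -> R) (x0 : X) (a b : option X) : R :=
  match a, b with
  | Some x, Some y => d x y
  | Some x, None => Num.max (d x x0) 1
  | None, Some y => Num.max (d y x0) 1
  | None, None => 0
  end.

(* sum_{i} (x_{2i-1} + x_{2i}) for a list of pairs *)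
Definition rep_sum (s : seq (option X * option X)) : {fset X} :=
  foldr (fun p acc => badd (badd (osing p.1) (osing p.2)) acc) fset0 s.

Definition rep_max (d : X -> X -> R) (x0 : X) (s : seq (option X * option X)) : R :=
  \big[Num.max/0]_(p <- s) dbar d x0 p.1 p.2.

Definition graev (d : X -> X -> R) (x0 : X) (u : {fset X}) : R :=
  inf [set r : R | exists s : seq (option X * option X),
        [/\ s != [::], rep_sum s = u & r = rep_max d x0 s]].

(* ultra-norm on the Boolean group B(X) (note -u = u) *)
Definition is_ultranorm (N : {fset X} -> R) : Prop :=
  [/\ (forall u, 0 <= N u), N fset0 = 0,
      (forall u v, N (badd u v) <= Num.max (N u) (N v)) &
      (forall u, N u = 0 -> u = fset0)].

Definition bact (G : Type) (pi : G -> X -> X) (g : G) (u : {fset X}) : {fset X} :=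
  [fset pi g x | x in u]%fset.

Definition nonarchimedean (H : topologicalZmodType) : Prop :=
  forall U : set H, nbhs (0 : H) U ->
    exists V : set H, [/\ open V, V 0, (forall a b, V a -> V b -> V (a - b)) & V `<=` U].

Definition unif_cont_into (d : X -> X -> R) (H : topologicalZmodType) (f : X -> H) : Prop :=
  forall U : set H, nbhs (0 : H) U ->
    exists2 del : R, 0 < del & forall x y, d x y < del -> U (f x - f y).

Definition norm_continuous (N : {fset X} -> R) (H : topologicalType) (F : {fset X} -> H) : Prop :=
  forall (u : {fset X}) (U : set H), nbhs (F u) U ->
    exists2 del : R, 0 < del & forall v, N (badd v u) < del -> U (F v).

Definition bhom (H : zmodType) (F : {fset X} -> H) : Prop :=
  forall u v, F (badd u v) = F u + F v.

(* (B(X), N) with u |-> {x} has the universal property defining B_NA(X, U_d) *)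
Definition is_free_BNA (d : X -> X -> R) (N : {fset X} -> R) : Prop :=
  forall (H : topologicalZmodType), (forall h : H, h + h = 0) -> nonarchimedean H ->
  forall f : X -> H, unif_cont_into d f ->
    exists F : {fset X} -> H,
      [/\ bhom F, norm_continuous N F, (forall x, F [fset x]%fset = f x) &
          forall F' : {fset X} -> H,
            [/\ bhom F', norm_continuous N F' & forall x, F' [fset x]%fset = f x] -> F' = F].

End Defs.

(* The Graev norm of u is the least possible maximum of the dbar-lengths of the
   pairs in a representation of u; concatenating representations makes it an
   ultra-norm.  Non-degeneracy, the isometry of x |-> {x} and the closedness of
   the image all come from one parity argument: if every pair of a representation
   of u has length at most M and c is farther than M from 0, the ultrametric
   inequality puts each pair entirely inside or entirely outside the ball of
   radius M around c, so that ball meets u in an even number of points; hence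
   every point of u far from 0 has a second point of u within distance M.
   The action of G on B(X) by images is continuous by pi-uniformity together with
   continuity of the action at the finitely many points of a fixed u0, and the
   universal property is witnessed by F u = sum_(x in u) f x: a representation of
   small norm consists of close pairs, whose images lie in a small open subgroup. *)

From Pilot Require Import Defs.
From HB Require Import structures.
From mathcomp Require Import all_boot all_order all_algebra.
From mathcomp Require Import finmap.
From mathcomp Require Import all_classical all_reals all_analysis.
From mathcomp Require Import zify.
Set Implicit Arguments.
Unset Strict Implicit.
Unset Printing Implicit Defensive.
Import Order.TTheory GRing.Theory Num.Theory.
Local Open Scope classical_set_scope.
Local Open Scope ring_scope.

Section BooleanGroup.
Local Open Scope fset_scope.
Variable X : choiceType.
Implicit Types (A B C D : {fset X}) (x : X).

Lemma in_badd A B y : (y \in badd A B) = (y \in A) (+) (y \in B).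
Proof. by rewrite /badd !inE; case: (y \in A); case: (y \in B). Qed.

Lemma baddA : associative (@badd X).
Proof.
move=> A B C; apply/fsetP=> y; rewrite !in_badd.
by case: (y \in A); case: (y \in B); case: (y \in C).
Qed.

Lemma baddC : commutative (@badd X).
Proof. by move=> A B; apply/fsetP=> y; rewrite !in_badd addbC. Qed.

Lemma badd0r A : badd A fset0 = A.
Proof. by apply/fsetP=> y; rewrite in_badd inE addbF. Qed.

Lemma badd0l A : badd fset0 A = A.
Proof. by rewrite baddC badd0r. Qed.

Lemma baddxx A : badd A A = fset0.
Proof. by apply/fsetP=> y; rewrite in_badd inE addbb. Qed.

Lemma baddACA A B C D : badd (badd A B) (badd C D) = badd (badd A C) (badd B D).
Proof.
apply/fsetP=> y; rewrite !in_badd.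
by case: (y \in A); case: (y \in B); case: (y \in C); case: (y \in D).
Qed.

Lemma badd1_notin x A : x \notin A -> badd [fset x] A = x |` A.
Proof.
move=> xA; apply/fsetP=> y; rewrite in_badd !inE.
by case: eqVneq => [->|]; rewrite ?(negbTE xA).
Qed.

Lemma odd_card_badd A B : odd #|` badd A B| = odd #|` A| (+) odd #|` B|.
Proof.
have -> : badd A B = (A `|` B) `\` (A `&` B).
  by apply/fsetP=> y; rewrite in_badd !inE; case: (y \in A); case: (y \in B).
rewrite cardfsDS ?fsubsetIl ?fsubsetU ?fsubsetIl // cardfsU.
have := fsubset_leq_card (fsubsetIl A B); have := fsubset_leq_card (fsubsetIr A B).
move: #|` A| #|` B| #|` A `&` B| => a b c ca cb.
have -> : (a + b - c - c = (a - c) + (b - c))%N by lia.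
by rewrite oddD !oddB //; case: (odd a); case: (odd b); case: (odd c).
Qed.

Lemma imfset_badd (f : X -> X) A B : injective f ->
  f @` badd A B = badd (f @` A) (f @` B).
Proof.
move=> finj; apply/fsetP => y.
have [[x ->]|ny] := pselect (exists x, y = f x).
  have memf C : (f x \in f @` C) = (x \in C) := mem_imfset _ _ finj x.
  by rewrite in_badd !memf in_badd.
have notin C : y \notin f @` C by apply/imfsetP => -[x _ yx]; apply: ny; exists x.
by rewrite in_badd !(negbTE (notin _)).
Qed.

Lemma imfset_osing (f : X -> X) a : f @` osing a = osing (omap f a).
Proof. by case: a => [x|] /=; rewrite ?imfset_fset1 ?imfset0. Qed.

End BooleanGroup.

Section GraevNorm.
Variables (R : realType) (X : choiceType) (d : X -> X -> R) (x0 : X).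
Hypothesis hd : is_ultrametric d.
Local Notation db := (dbar d x0).
Local Notation rmax := (rep_max d x0).
Local Notation N := (graev d x0).
Implicit Types (s t : seq (option X * option X)) (u v w : {fset X}).

Lemma ultra_ge0 x y : 0 <= d x y. Proof. by case: hd. Qed.
Lemma ultra_xx x : d x x = 0. Proof. by case: hd. Qed.
Lemma ultra_eq0 x y : d x y = 0 -> x = y. Proof. by case: hd => _ _ + _ _; apply. Qed.
Lemma ultra_sym x y : d x y = d y x. Proof. by case: hd. Qed.
Lemma ultra_max x y z : d x z <= Num.max (d x y) (d y z).
Proof. by case: hd => _ _ _ _; apply. Qed.

Lemma dbar_ge0 a b : 0 <= db a b.
Proof. by case: a b => [x|] [y|] //=; rewrite ?ultra_ge0 // le_max ler01 orbT. Qed.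

Lemma dbar_sym a b : db a b = db b a.
Proof. by case: a b => [x|] [y|] //=; rewrite ultra_sym. Qed.

Lemma dbar_None_ge1 x : 1 <= db (Some x) None.
Proof. by rewrite /= le_max lexx orbT. Qed.

Lemma dbar_max a b c : db a c <= Num.max (db a b) (db b c).
Proof.
case: a b c => [x|] [y|] [z|] /=; rewrite ?ge_max ?le_max ?lexx ?orbT ?dbar_ge0 //= ?andbT.
- by rewrite -le_max ultra_max.
- by rewrite orbA -le_max ultra_max.
- by have := ultra_max x x0 z; rewrite le_max (ultra_sym x0 z) => /orP[] ->; rewrite ?orbT.
- by have := ultra_max z y x0; rewrite le_max (ultra_sym z y) => /orP[] ->; rewrite ?orbT.
- by rewrite ler01 !orbT.
Qed.

Lemma rep_sum_cat s t : rep_sum (s ++ t) = badd (rep_sum s) (rep_sum t).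
Proof. by elim: s => [|p s IH] /=; rewrite ?badd0l // IH baddA. Qed.

Lemma rep_max_cons p s : rmax (p :: s) = Num.max (db p.1 p.2) (rmax s).
Proof. by rewrite /rep_max big_cons. Qed.

Lemma rep_max_ge0 s : 0 <= rmax s.
Proof. exact: bigmax_ge_id. Qed.

Lemma rep_max_ge s p : p \in s -> db p.1 p.2 <= rmax s.
Proof. by move=> ps; apply: (@le_bigmax_seq _ _ _ s 0 p xpredT (fun p => db p.1 p.2) ps). Qed.

Lemma rep_max_lt s c : 0 < c -> (forall p, p \in s -> db p.1 p.2 < c) -> rmax s < c.
Proof. by move=> c0 lt_c; rewrite /rep_max big_seq; apply: bigmax_lt. Qed.

Lemma rep_exists u : exists s, s != [::] /\ rep_sum s = u.
Proof.
elim/fset1U_rect: u => [|x A xA [s [s0 sA]]].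
  by exists [:: (None, None)]; rewrite /= baddxx badd0r.
exists ((Some x, None) :: s); split => //.
by rewrite /= badd0r sA badd1_notin.
Qed.

Lemma graev_le s u : s != [::] -> rep_sum s = u -> N u <= rmax s.
Proof.
move=> s0 su; apply: ge_inf; last by exists s.
by exists 0 => _ [t [_ _ ->]]; apply: rep_max_ge0.
Qed.

Lemma graev_lt u c : N u < c -> exists s, [/\ s != [::], rep_sum s = u & rmax s < c].
Proof.
have [s [s0 su]] := rep_exists u.
have ne : [set r | exists s, [/\ s != [::], rep_sum s = u & r = rmax s]] !=set0.
  by exists (rmax s), s.
by move=> /(inf_lt ne) [_ [t [t0 tu ->]] ?]; exists t.
Qed.

Lemma graev_ge0 u : 0 <= N u.
Proof.
have [s [s0 su]] := rep_exists u.
by apply: lb_le_inf; [exists (rmax s), s | move=> _ [t [_ _ ->]]; apply: rep_max_ge0].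
Qed.

Lemma graev0 : N fset0 = 0.
Proof.
apply/le_anti; rewrite graev_ge0 andbT.
have e : rep_sum [:: (@None X, @None X)] = fset0 by rewrite /= baddxx badd0r.
apply: (le_trans (graev_le _ e)) => //.
by rewrite rep_max_cons /rep_max big_nil /= maxxx.
Qed.

Lemma graev_ultra u v : N (badd u v) <= Num.max (N u) (N v).
Proof.
rewrite leNgt; apply/negP => uv_gt; move: (uv_gt); rewrite gt_max => /andP[ltu ltv].
have [s [s0 su hs]] := graev_lt ltu; have [t [_ tv ht]] := graev_lt ltv; subst u v.
have st_lt : rmax (s ++ t) < N (badd (rep_sum s) (rep_sum t)).
  apply: rep_max_lt => [|p]; first exact: le_lt_trans (graev_ge0 _) ltu.
  by rewrite mem_cat => /orP[] /rep_max_ge /le_lt_trans; apply.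
have st0 : s ++ t != [::] by case: (s) s0.
by have := graev_le st0 (rep_sum_cat s t); rewrite leNgt st_lt.
Qed.

Definition ball_part c M u := [fset x in u | db c (Some x) <= M]%fset.

Lemma ball_part_badd c M u w :
  ball_part c M (badd u w) = badd (ball_part c M u) (ball_part c M w).
Proof.
apply/fsetP=> y; rewrite /ball_part !in_badd !inE.
by case: (y \in u); case: (y \in w); case: (db c (Some y) <= M).
Qed.

Lemma ball_part0 c M : ball_part c M fset0 = fset0.
Proof. by apply/fsetP=> y; rewrite !inE. Qed.

Lemma odd_ball_part_osing c M a :
  M < db c None -> odd #|` ball_part c M (osing a)| = (db c a <= M).
Proof.
case: a => [x|] /= cM; last by rewrite ball_part0 cardfs0 leNgt cM.
have -> : ball_part c M [fset x]%fset = if db c (Some x) <= M then [fset x]%fset else fset0.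
  apply/fsetP=> y; rewrite /ball_part !inE; case: ifP => hx; rewrite ?inE;
  by case: eqVneq => [->|] //=; rewrite hx.
by case: ifP; rewrite ?cardfs1 ?cardfs0.
Qed.

Lemma even_ball_part_rep s c M : (forall p, p \in s -> db p.1 p.2 <= M) ->
  M < db c None -> ~~ odd #|` ball_part c M (rep_sum s)|.
Proof.
move=> hs cM; elim: s hs => [|p s IH] hs /=; first by rewrite ball_part0 cardfs0.
have IHs : ~~ odd #|` ball_part c M (rep_sum s)|.
  by apply: IH => q qs; apply: hs; rewrite inE qs orbT.
rewrite !ball_part_badd !odd_card_badd (negbTE IHs) !odd_ball_part_osing // addbF.
have hp := hs p (mem_head _ _).
suff -> : (db c p.1 <= M) = (db c p.2 <= M) by rewrite addbb.
apply/idP/idP => h.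
  by apply: (le_trans (dbar_max c p.1 p.2)); rewrite ge_max h hp.
by apply: (le_trans (dbar_max c p.2 p.1)); rewrite ge_max h (dbar_sym p.2) hp.
Qed.

Lemma rep_companion s a : a \in rep_sum s -> rmax s < db (Some a) None ->
  exists2 y, y \in rep_sum s & y != a /\ d a y <= rmax s.
Proof.
move=> a_in aM; have [//|none] := pselect (exists2 y, y \in rep_sum s & y != a /\ d a y <= rmax s).
have := even_ball_part_rep (fun p ps => rep_max_ge ps) aM.
suff -> : ball_part (Some a) (rmax s) (rep_sum s) = [fset a]%fset by rewrite cardfs1.
apply/fsetP=> y; rewrite /ball_part !inE /=; apply/andP/eqP => [[ys ay]|->].
  by apply: contrapT => ya; apply: none; exists y => //; split => //; apply/eqP.
by rewrite a_in ultra_xx rep_max_ge0.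
Qed.

Lemma graev_companion w c a : N w < c -> c <= 1 -> a \in w ->
  exists2 y, y \in w & y != a /\ d a y < c.
Proof.
move=> /graev_lt [s [_ <- sc]] c1 aw.
have [|y ys [ya ay]] := rep_companion aw.
  exact: lt_le_trans sc (le_trans c1 (dbar_None_ge1 a)).
by exists y => //; split => //; apply: le_lt_trans ay sc.
Qed.

Lemma graev_fset1 x y : N (badd [fset x] [fset y])%fset = d x y.
Proof.
apply/le_anti/andP; split.
  have e : rep_sum [:: (Some x, Some y)] = badd [fset x]%fset [fset y]%fset.
    by rewrite /= badd0r.
  apply: (le_trans (graev_le _ e)) => //.
  by rewrite rep_max_cons /rep_max big_nil /= ge_max lexx ultra_ge0.
rewrite leNgt; apply/negP => /graev_lt [s [_ su hs]].
have xy : x != y by apply: contraTneq hs => ->; rewrite ultra_xx -leNgt rep_max_ge0.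
wlog xM : x y su hs xy / rmax s < db (Some x) None.
  move=> wlog; have [xM|xN] := boolP (rmax s < db (Some x) None).
    exact: (wlog x y su hs xy xM).
  have [yM|yN] := boolP (rmax s < db (Some y) None).
    by apply: (wlog y x _ _ _ yM); rewrite 1?baddC 1?ultra_sym 1?eq_sym.
  have xN' : db (Some x) None <= rmax s by rewrite leNgt.
  have yN' : db None (Some y) <= rmax s by rewrite dbar_sym leNgt.
  suff : d x y <= rmax s by rewrite leNgt hs.
  by apply: (le_trans (dbar_max (Some x) None (Some y))); rewrite ge_max xN' yN'.
have xs : x \in rep_sum s by rewrite su in_badd !inE eqxx (negbTE xy).
have [z] := rep_companion xs xM; rewrite su in_badd !inE => + [zx].
by rewrite (negbTE zx) /= => /eqP ->; rewrite leNgt hs.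
Qed.

Definition separation u := \big[Num.min/1]_(a <- u) \big[Num.min/1]_(y <- u | y != a) d a y.

Lemma separation_gt0 u : 0 < separation u.
Proof.
apply: lt_bigmin => // a _; apply: lt_bigmin => // y ya.
by rewrite lt_neqAle ultra_ge0 andbT; apply: contra ya => /eqP/esym/ultra_eq0 ->.
Qed.

Lemma separation_le1 u : separation u <= 1.
Proof. exact: bigmin_le_id. Qed.

Lemma separation_eq u a y : a \in u -> y \in u -> d a y < separation u -> y = a.
Proof.
move=> au yu; apply: contraTeq => ya; rewrite -leNgt.
apply: (le_trans (ge_bigmin_seq _ _ xpredT _ au isT)).
exact: (ge_bigmin_seq _ _ (fun y => y != a) _ yu ya).
Qed.

Lemma graev_eq0 u : N u = 0 -> u = fset0.
Proof.
move=> u0; apply/eqP; apply: contraT => /fset0Pn [a au].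
have small : N u < separation u by rewrite u0 separation_gt0.
have [y yu [ya ay]] := graev_companion small (separation_le1 u) au.
by rewrite (separation_eq au yu ay) eqxx in ya.
Qed.

(* If u + x had small norm, every point of u other than x would have x as its
   companion, so u would have at most one point by the ultrametric inequality. *)
Lemma separation_le_graev u x : (forall z, u <> [fset z]%fset) ->
  separation u <= N (badd u [fset x]%fset).
Proof.
move=> hu; rewrite leNgt; apply/negP => small.
have comp := graev_companion small (separation_le1 u).
have in_w z : (z \in badd u [fset x]%fset) = (z \in u) (+) (z == x).
  by rewrite in_badd inE.
have near_x a : a \in u -> a != x -> (x \notin u) && (d a x < separation u).
  move=> au ax; have [|y] := comp a; first by rewrite in_w au (negbTE ax).
  rewrite in_w; case: (boolP (y \in u)) => [yu _ [ya ay]|yu /= /eqP yx [_]].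
    by rewrite (separation_eq au yu ay) eqxx in ya.
  by rewrite -yx yu.
have [[a au ax]|all_x] := pselect (exists2 a, a \in u & a != x).
  have /andP[xu ax_near] := near_x a au ax.
  have [b bu ba] : exists2 b, b \in u & b != a.
    apply: contrapT => only_a; apply: (hu a); apply/fsetP => z; rewrite inE.
    apply/idP/eqP => [zu|->//]; apply: contrapT => /eqP za; exact: only_a (ex_intro2 _ _ z zu za).
  have bx : b != x by apply: contraNneq xu => <-.
  have /andP[_ bx_near] := near_x b bu bx.
  have ab : d a b < separation u.
    by apply: le_lt_trans (ultra_max a x b) _; rewrite gt_max ax_near ultra_sym.
  by rewrite (separation_eq au bu ab) eqxx in ba.
have u_x z : z \in u -> z = x.
  by move=> zu; apply: contrapT => /eqP zx; apply: all_x; exists z.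
have xu : x \notin u.
  apply/negP => xu; apply: (hu x); apply/fsetP => z; rewrite inE.
  by apply/idP/eqP => [/u_x|->].
have [|y] := comp x; first by rewrite in_w (negbTE xu) eqxx.
rewrite in_w => yw [yx _]; move: yw; case: (boolP (y \in u)) => [/u_x yx'|_ /=].
  by rewrite yx' eqxx in yx.
by rewrite (negbTE yx).
Qed.

Lemma graev_imfset_lt (f : X -> X) del c v : injective f -> 0 < c -> del <= 1 ->
  (forall a b, d a b < del -> d (f a) (f b) < c) -> N v < del -> N (f @` v)%fset < c.
Proof.
move=> finj c0 del1 fc /graev_lt [s [s0 <- hs]].
have fs_sum t : rep_sum [seq (omap f p.1, omap f p.2) | p <- t] = (f @` rep_sum t)%fset.
  elim: t => [|p t IH] /=; first by rewrite imfset0.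
  by rewrite IH !imfset_badd // !imfset_osing.
apply: (le_lt_trans (graev_le _ (fs_sum s))); first by case: (s) s0.
apply: rep_max_lt => // _ /mapP [[a b] ps ->] /=.
have := le_lt_trans (rep_max_ge ps) hs.
case: a b {ps} => [a|] [b|] /= hab; [exact: fc | | | exact: c0];
  by have := lt_le_trans hab del1; rewrite ltNge le_max lexx orbT.
Qed.

Lemma graev_imfset_pointwise_lt (f f' : X -> X) e u : injective f -> injective f' ->
  0 < e -> (forall x, x \in u -> d (f x) (f' x) < e) ->
  N (badd (f @` u) (f' @` u))%fset < e.
Proof.
move=> finj f'inj e0; elim/fset1U_rect: u => [|x A xA IH] hA.
  by rewrite !imfset0 baddxx graev0.
rewrite -(badd1_notin xA) !imfset_badd // !imfset_fset1 baddACA.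
apply: (le_lt_trans (graev_ultra _ _)); rewrite gt_max graev_fset1 hA ?fset1U1 //=.
by apply: IH => y yA; apply: hA; rewrite inE yA orbT.
Qed.

End GraevNorm.

Section InducedAction.
Variables (R : realType) (X : choiceType) (d : X -> X -> R) (x0 : X).
Variables (G : topologicalType) (mul : G -> G -> G) (inv : G -> G) (one : G).
Variable pi : G -> X -> X.
Hypotheses (hd : is_ultrametric d) (htg : is_topgroup mul inv one).
Hypothesis hact : is_action mul one pi.
Local Notation N := (graev d x0).

Lemma action_injective g : injective (pi g).
Proof.
case: hact => act1 actM; case: htg => _ _ mulV _ _.
by move=> x y /(congr1 (pi (inv g))); rewrite -!actM (proj1 (mulV g)) !act1.
Qed.

Lemma bact1 g x : bact pi g [fset x]%fset = [fset pi g x]%fset.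
Proof. exact: imfset_fset1. Qed.

Lemma bact_id u : bact pi one u = u.
Proof.
case: hact => act1 _; rewrite -[RHS]imfset_id /bact.
by apply: eq_imfset => x //=; rewrite act1.
Qed.

Lemma bactM g h u : bact pi (mul g h) u = bact pi g (bact pi h u).
Proof.
case: hact => _ actM; rewrite /bact -imfset_comp.
by apply: eq_imfset => x //=; rewrite actM.
Qed.

Lemma bact_badd g u v : bact pi g (badd u v) = badd (bact pi g u) (bact pi g v).
Proof. by rewrite /bact imfset_badd //; exact: action_injective. Qed.

Lemma nbhs_pointwise_close (hcont : action_continuous d pi) g0 e (u : {fset X}) : 0 < e ->
  nbhs g0 [set g | forall x, x \in u -> d (pi g x) (pi g0 x) < e].
Proof.
move=> e0; elim/fset1U_rect: u => [|x A _ IH].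
  by apply: (filterS _ filterT) => g _ x; rewrite inE.
have [Ox [Ox_g0 [del del0 Ox_close]]] := hcont g0 x e e0.
apply: (filterS _ (filterI Ox_g0 IH)) => g [Oxg gA] y; rewrite !inE => /orP[/eqP->|/gA//].
by apply: Ox_close; rewrite ?ultra_xx.
Qed.

(* g u - g0 u0 = g (u - u0) + (g u0 - g0 u0): the first term is small by
   pi-uniformity, the second by continuity at the finitely many points of u0. *)
Lemma bact_continuous (hcont : action_continuous d pi) (hunif : pi_uniform d pi)
    g0 u0 e : 0 < e ->
  exists O : set G, nbhs g0 O /\
    exists2 del : R, 0 < del & forall g u, O g -> N (badd u u0) < del ->
      N (badd (bact pi g u) (bact pi g0 u0)) < e.
Proof.
move=> e0; have [del del0 [Ou [Ou_g0 Ou_close]]] := hunif e g0 e0.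
exists (Ou `&` [set g | forall x, x \in u0 -> d (pi g x) (pi g0 x) < e]).
split; first exact: filterI Ou_g0 (nbhs_pointwise_close hcont g0 u0 e0).
exists (Num.min del 1) => [|g u [Oug g_close] small]; first by rewrite lt_min del0 ltr01.
have -> : badd (bact pi g u) (bact pi g0 u0) =
    badd (bact pi g (badd u u0)) (badd (bact pi g u0) (bact pi g0 u0)).
  by rewrite bact_badd -baddA (baddA (bact pi g u0)) baddxx badd0l.
rewrite /bact; apply: (le_lt_trans (graev_ultra d x0 _ _)); rewrite gt_max; apply/andP; split.
  apply: graev_imfset_lt (@action_injective g) e0 _ _ small; first by rewrite ge_min lexx orbT.
  by move=> a b; rewrite lt_min => /andP[ab _]; apply: Ou_close.
exact (graev_imfset_pointwise_lt x0 hd (@action_injective g) (@action_injective g0) e0 g_close).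
Qed.

End InducedAction.

Section UniversalProperty.
Variable X : choiceType.
Implicit Types (A B u : {fset X}).

Lemma bhom0 (H : zmodType) (F : {fset X} -> H) : bhom F -> F fset0 = 0.
Proof. by move=> hF; apply: (@addrI _ (F fset0)); rewrite -hF baddxx addr0. Qed.

Lemma bhom_eq (H : zmodType) (F F' : {fset X} -> H) : bhom F -> bhom F' ->
  (forall x, F [fset x]%fset = F' [fset x]%fset) -> F = F'.
Proof.
move=> hF hF' e; apply: funext; elim/fset1U_rect => [|x A xA IH].
  by rewrite !bhom0.
by rewrite -(badd1_notin xA) hF hF' e IH.
Qed.

Section BooleanTarget.
Variables (H : zmodType) (hB : forall h : H, h + h = 0) (f : X -> H).

Lemma fsum_badd1 x B :
  \sum_(y <- badd [fset x]%fset B) f y = f x + \sum_(y <- B) f y.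
Proof.
have [xB|xB] := boolP (x \in B); last by rewrite badd1_notin // big_fsetU1.
have -> : badd [fset x]%fset B = (B `\ x)%fset.
  by apply/fsetP => y; rewrite in_badd !inE; case: eqVneq => [->|] //=; rewrite xB.
by rewrite (big_fsetD1 _ xB) addrA hB add0r.
Qed.

Lemma fsum_badd : bhom (fun u => \sum_(x <- u) f x).
Proof.
move=> A B; elim/fset1U_rect: A => [|x A xA IH].
  by rewrite badd0l big_seq_fset0 add0r.
by rewrite -(badd1_notin xA) -baddA !fsum_badd1 IH addrA.
Qed.

End BooleanTarget.

Lemma nbhs0_translate (H : topologicalZmodType) (c : H) (U : set H) :
  nbhs c U -> nbhs (0 : H) [set w | U (w + c)].
Proof.
have pair_cont : {for 0, continuous (fun w : H => (w, c))}.
  by apply: cvg_pair; [exact: cvg_id | exact: cvg_cst].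
have := continuous_comp pair_cont (add_continuous (0, c)).
by rewrite /prop_for /continuous_at /= add0r; apply.
Qed.

(* Plain [norm_continuous] would denote the mathcomp-analysis notion. *)
Lemma fsum_graev_continuous (R : realType) (d : X -> X -> R) (x0 : X)
    (H : topologicalZmodType) (f : X -> H) :
  (forall h : H, h + h = 0) -> nonarchimedean H -> unif_cont_into d f ->
  Defs.norm_continuous (graev d x0) (fun u => \sum_(x <- u) f x).
Proof.
move=> hB hna hf u U /nbhs0_translate /hna [V [oV V0 Vsub VU]].
have [del del0 Vdel] := hf V (open_nbhs_nbhs (conj oV V0)).
have VD a b : V a -> V b -> V (a + b).
  by move=> Va Vb; have := Vsub a (0 - b) Va (Vsub 0 b V0 Vb); rewrite sub0r opprK.
have oppB (h : H) : - h = h by rewrite -[LHS]add0r -(hB h) addrK.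
exists (Num.min del 1) => [|v]; first by rewrite lt_min del0 ltr01.
move=> /graev_lt [s [_ vu hs]].
suff : V (\sum_(x <- rep_sum s) f x) by rewrite vu fsum_badd // => /VU; rewrite /= -addrA hB addr0.
elim: s {vu} hs => [|[a b] s IH] /=; first by rewrite big_seq_fset0.
rewrite rep_max_cons gt_max => /andP[hp hs]; rewrite !fsum_badd //; apply: VD (IH hs).
case: a b hp => [a|] [b|] /= hp.
- by rewrite !big_seq_fset1 -[f b]oppB; apply: Vdel; move: hp; rewrite lt_min => /andP[].
- by move: hp; rewrite lt_min andbC ltNge le_max lexx orbT.
- by move: hp; rewrite lt_min andbC ltNge le_max lexx orbT.
- by rewrite big_seq_fset0 addr0.
Qed.

Lemma graev_free_BNA (R : realType) (d : X -> X -> R) (x0 : X) :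
  is_free_BNA d (graev d x0).
Proof.
move=> H hB hna f hf; exists (fun u => \sum_(x <- u) f x); split.
- exact: fsum_badd.
- exact: fsum_graev_continuous.
- by move=> x; rewrite big_seq_fset1.
- move=> F' [hF' _ hF'x]; apply: bhom_eq hF' (fsum_badd hB f) _ => x.
  by rewrite hF'x big_seq_fset1.
Qed.

End UniversalProperty.

Theorem theorem8p2 (R : realType) (X : choiceType) (d : X -> X -> R)
  (G : topologicalType) (mul : G -> G -> G) (inv : G -> G) (one : G)
  (pi : G -> X -> X) :
  is_ultrametric d -> (exists x : X, True) ->
  is_topgroup mul inv one -> is_action mul one pi ->
  action_continuous d pi -> pi_uniform d pi ->
  forall x0 : X,
  [/\ is_ultranorm (graev d x0),
      (* iota(x) = {x} is an isometric embedding *)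
      (forall x y, graev d x0 (badd [fset x]%fset [fset y]%fset) = d x y) /\
      (* iota(X) is closed in (B(X), ||.||) *)
      (forall u : {fset X}, (forall x, u <> [fset x]%fset) ->
         exists2 e : R, 0 < e & forall x, e <= graev d x0 (badd u [fset x]%fset)),
      (* G acts on B(X) by automorphisms, and iota is G-equivariant *)
      [/\ (forall u, bact pi one u = u),
          (forall g h u, bact pi (mul g h) u = bact pi g (bact pi h u)),
          (forall g u v, bact pi g (badd u v) = badd (bact pi g u) (bact pi g v)) &
          (forall g x, bact pi g [fset x]%fset = [fset pi g x]%fset)],
      (* the action G x B(X) -> B(X) is continuous *)
      (forall (g0 : G) (u0 : {fset X}) (e : R), 0 < e ->
         exists O : set G, nbhs g0 O /\
           exists2 del : R, 0 < del &
             forall g u, O g -> graev d x0 (badd u u0) < del ->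
               graev d x0 (badd (bact pi g u) (bact pi g0 u0)) < e) &
      (* (B(X), ||.||) is the free Boolean non-archimedean group B_NA(X, U_d) *)
      is_free_BNA d (graev d x0)].
Proof.
move=> hd _ htg hact hcont hunif x0; split.
- split; [exact: graev_ge0 | exact: graev0 | exact: graev_ultra | exact: graev_eq0 hd].
- split=> [x y|u hu]; first exact: graev_fset1 x0 hd x y.
  exists (separation d u) => [|x]; first exact: separation_gt0 hd u.
  exact (separation_le_graev x0 hd x hu).
- split; [exact: bact_id hact | exact: bactM hact | exact: bact_badd htg hact | exact: bact1].
- exact (bact_continuous x0 hd htg hact hcont hunif).
- exact: graev_free_BNA.
Qed.
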